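(* Let $\alpha\in\mathbb{R}$, let $\mathbb{Q}[x]^+_{x=\alpha}=\{p\in\mathbb{Q}[x]: p(\alpha)>0\}$, and suppose $\mathbb{Q}[x]^+_{x=\alpha}=H_1\sqcup H_2$ with $H_1,H_2$ disjoint nonempty subsets, each closed under addition and multiplication. Then: (i) for every integer $i\ge 2$, at least one of $H_1,H_2$ contains both a polynomial of degree $i$ with positive leading coefficient and a polynomial of degree $i$ with negative leading coefficient; (ii) for every integer $N\ge1$ and $j=1,2$, $H_j$ contains a polynomial of degree exactly $N$. *)

From HB Require Import structures.
From mathcomp Require Import all_boot all_order all_algebra.
From mathcomp Require Import reals.
Set Implicit Arguments. Unset Strict Implicit. Unset Printing Implicit Defensive.
Import Order.TTheory GRing.Theory Num.Theory.
Local Open Scope ring_scope.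

Definition pos_at (R : realType) (alpha : R) (p : {poly rat}) : Prop :=
  0 < (map_poly (ratr : rat -> R) p).[alpha].

Definition add_mul_closed (H : {poly rat} -> Prop) : Prop :=
  (forall p q, H p -> H q -> H (p + q)) /\ (forall p q, H p -> H q -> H (p * q)).

(* If a set [A] of rational polynomials closed under sums and products contains
   every linear polynomial positive at [alpha], it contains every polynomial [f]
   positive at [alpha]: for [f] of degree [n + 1] with leading coefficient [a],
   take rationals [r < alpha < s] with [s - r] small; then
   [|a| (X - r)^n w], with [w = X - r] or [w = s - X] according to the sign of
   [a], lies in [A], has the degree and leading coefficient of [f] and a
   smaller value at [alpha], so subtracting it lowers the degree.
   Hence each part of the partition contains a linear polynomial (otherwise the
   other part would contain everything), and its powers have every degree.  For (i), the quadratic [(X - r) (s - X)] lies in some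
   part together with one of its linear factors [l] (otherwise it lies in the
   other part), and [l ^+ i], [(X - r) (s - X) l ^+ (i - 2)] have leading
   coefficients of opposite signs. *)

From HB Require Import structures.
From mathcomp Require Import all_boot all_order all_algebra.
From mathcomp Require Import reals.
From mathcomp Require Import lra ring.
From Stdlib Require Import Classical.
Set Implicit Arguments.
Unset Strict Implicit.
Unset Printing Implicit Defensive.
Import Order.TTheory GRing.Theory Num.Theory.
Local Open Scope ring_scope.

Lemma size_exp_eq (R : idomainType) (p : {poly R}) n m :
  size p = n.+1 -> size (p ^+ m) = (n * m).+1.
Proof.
move=> sp; have := size_exp p m; rewrite sp /=.
have : p ^+ m != 0 by rewrite expf_neq0 // -size_poly_eq0 sp.
by rewrite -size_poly_eq0; case: (size _) => // k _ /= ->.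
Qed.

Lemma size_sub_lead_eq (R : nzRingType) (p q : {poly R}) n :
  size p = n.+1 -> size q = n.+1 -> lead_coef p = lead_coef q ->
  (size (p - q)%R <= n)%N.
Proof.
move=> sp sq lpq; apply/leq_sizeP => j; rewrite leq_eqVlt coefB.
case/orP=> [/eqP <- | lt_nj]; last by rewrite !nth_default ?subrr ?sp ?sq.
by move: lpq; rewrite !lead_coefE sp sq /= => ->; rewrite subrr.
Qed.

Lemma size_CsubX (R : nzRingType) (s : R) : size (s%:P - 'X) = 2%N.
Proof. by rewrite -opprB size_polyN size_XsubC. Qed.

Lemma lead_coef_CsubX (R : nzRingType) (s : R) : lead_coef (s%:P - 'X) = -1.
Proof. by rewrite -opprB lead_coefN lead_coefXsubC. Qed.

Lemma add_mul_closed_mulX (H : {poly rat} -> Prop) p l k :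
  add_mul_closed H -> H p -> H l -> H (p * l ^+ k).
Proof.
move=> clH Hp Hl; elim: k => [|k IH]; first by rewrite mulr1.
by rewrite exprSr mulrA; apply: clH.2.
Qed.

Lemma add_mul_closedX (H : {poly rat} -> Prop) l k :
  add_mul_closed H -> H l -> H (l ^+ k.+1).
Proof. by move=> clH Hl; rewrite exprS; apply: add_mul_closed_mulX. Qed.

Lemma add_mul_closed_lead_signs (H : {poly rat} -> Prop) l q i :
  add_mul_closed H -> H l -> H q -> size l = 2%N -> size q = 3%N ->
  lead_coef q < 0 -> (2 <= i)%N ->
  exists p p', [/\ H p, H p', size p = i.+1 /\ size p' = i.+1,
                   0 < lead_coef p & lead_coef p' < 0].
Proof.
move=> clH Hl Hq sl sq lq; case: i => [|[|k]] // _.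
have l_neq0 : lead_coef l != 0 by rewrite lead_coef_eq0 -size_poly_eq0 sl.
have HP : H (l ^+ k.+2) by exact: add_mul_closedX.
have HQ : H (q * l ^+ k) by exact: add_mul_closed_mulX.
have sP : size (l ^+ k.+2) = k.+3 by rewrite (size_exp_eq _ sl) mul1n.
have sQ : size (q * l ^+ k) = k.+3.
  rewrite size_mul ?sq ?(size_exp_eq _ sl) ?mul1n //.
    by rewrite -size_poly_eq0 sq.
  by rewrite -size_poly_eq0 (size_exp_eq _ sl).
have l2_gt0 : 0 < lead_coef l ^+ 2 by rewrite exprn_even_gt0 ?l_neq0 ?orbT.
have lP : lead_coef (l ^+ k.+2) = lead_coef l ^+ k * lead_coef l ^+ 2.
  by rewrite lead_coef_exp -exprD addn2.
have lQ : lead_coef (q * l ^+ k) = lead_coef q * lead_coef l ^+ k.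
  by rewrite lead_coefM lead_coef_exp.
have [lk_gt0|lk_lt0|/eqP] := ltrgt0P (lead_coef l ^+ k).
- by exists (l ^+ k.+2), (q * l ^+ k); split; rewrite ?lP ?lQ //; nra.
- by exists (q * l ^+ k), (l ^+ k.+2); split; rewrite ?lP ?lQ //; nra.
- by rewrite expf_eq0 (negPf l_neq0) andbF.
Qed.

Section PositiveAtAlpha.
Variables (R : realType) (alpha : R).

Definition ev_at : {poly rat} -> R := horner_eval alpha \o map_poly ratr.
HB.instance Definition _ := GRing.RMorphism.on ev_at.

Lemma pos_atE p : pos_at alpha p = (0 < ev_at p).
Proof. by []. Qed.

Lemma ev_atX : ev_at 'X = alpha.
Proof. by rewrite /ev_at /= map_polyX horner_evalE hornerX. Qed.

Lemma ev_atC c : ev_at c%:P = ratr c.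
Proof. by rewrite /ev_at /= map_polyC horner_evalE hornerC. Qed.

Lemma ev_atXsubC r : ev_at ('X - r%:P) = alpha - ratr r.
Proof. by rewrite rmorphB /= ev_atX ev_atC. Qed.

Lemma ev_atCsubX s : ev_at (s%:P - 'X) = ratr s - alpha.
Proof. by rewrite rmorphB /= ev_atX ev_atC. Qed.

Lemma pos_at_XsubC r : ratr r < alpha -> pos_at alpha ('X - r%:P).
Proof. by rewrite pos_atE ev_atXsubC subr_gt0. Qed.

Lemma pos_at_CsubX s : alpha < ratr s -> pos_at alpha (s%:P - 'X).
Proof. by rewrite pos_atE ev_atCsubX subr_gt0. Qed.

Lemma rat_bracket (e : R) : 0 < e -> exists r s : rat,
  [/\ ratr r < alpha, alpha < ratr s & ratr s - ratr r < e].
Proof.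
move=> e_gt0.
have [r] := @rat_in_itvoo R (alpha - e / 2) alpha ltac:(lra).
have [s] := @rat_in_itvoo R alpha (alpha + e / 2) ltac:(lra).
rewrite !in_itv /= => /andP[? ?] /andP[? ?].
by exists r, s; split; lra.
Qed.

Section LinearlyGenerated.
Variable A : {poly rat} -> Prop.
Hypothesis clA : add_mul_closed A.
Hypothesis linA : forall l : {poly rat}, size l = 2%N -> pos_at alpha l -> A l.

Lemma XsubC_in r : ratr r < alpha -> A ('X - r%:P).
Proof. by move/pos_at_XsubC; apply: linA; rewrite size_XsubC. Qed.

Lemma CsubX_in s : alpha < ratr s -> A (s%:P - 'X).
Proof. by move/pos_at_CsubX; apply: linA; rewrite size_CsubX. Qed.

Lemma const_in c : 0 < c -> A c%:P.
Proof.
move=> c_gt0; have c_gt0' : 0 < ratr c :> R by rewrite ltr0q.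
have [r] := @rat_in_itvoo R (alpha - ratr c) alpha ltac:(lra).
rewrite in_itv /= => /andP[lt_r lt_ra].
have -> : c%:P = ('X - r%:P) + ((r + c)%:P - 'X) by rewrite polyCD; ring.
apply: clA.1; first exact: XsubC_in.
by apply: CsubX_in; rewrite rmorphD /=; lra.
Qed.

Lemma small_in a n (eps : R) : a != 0 -> 0 < eps -> exists g,
  [/\ A g, lead_coef g = a, size g = n.+2 & ev_at g < eps].
Proof.
move=> a_neq0 eps_gt0; set c := `|a|.
have c_gt0 : 0 < c by rewrite normr_gt0.
have c_gt0' : 0 < ratr c :> R by rewrite ltr0q.
have e_gt0 : 0 < Num.min 1 (eps / ratr c) by rewrite lt_min ltr01 divr_gt0.
have [r [s [lt_r lt_s]]] := rat_bracket e_gt0.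
rewrite lt_min => /andP[lt_sr1 lt_sre].
have u01 : 0 <= ev_at ('X - r%:P) <= 1 by rewrite ev_atXsubC; apply/andP; lra.
have build w : A w -> size w = 2%N -> 0 < ev_at w < eps / ratr c -> exists g,
    [/\ A g, lead_coef g = c * lead_coef w, size g = n.+2 & ev_at g < eps].
  move=> Aw sw /andP[w_gt0 w_lt]; exists (c%:P * ('X - r%:P) ^+ n * w); split.
  - apply: clA.2 => //.
    by apply: add_mul_closed_mulX; [|exact: const_in|exact: XsubC_in].
  - by rewrite !lead_coefM lead_coefC lead_coef_exp lead_coefXsubC expr1n mulr1.
  - rewrite -mulrA size_Cmul ?gt_eqF // size_mul ?size_exp_XsubC ?sw ?addn2 //.
      by rewrite -size_poly_eq0 size_exp_XsubC.
    by rewrite -size_poly_eq0 sw.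
  - have /andP[u0 u1] := u01.
    have un_le1 : ev_at ('X - r%:P) ^+ n <= 1 by exact: exprn_ile1.
    have un_ge0 : 0 <= ev_at ('X - r%:P) ^+ n by exact: exprn_ge0.
    rewrite !rmorphM rmorphXn /= ev_atC.
    have cw_gt0 : 0 < ratr c * ev_at w by exact: mulr_gt0.
    move: w_lt; rewrite ltr_pdivlMr // => w_lt; nra.
have [a_gt0|a_lt0|/eqP] := ltrgt0P a; last by rewrite (negPf a_neq0).
- have [|g [Ag lg sg eg]] := build _ (XsubC_in lt_r) (size_XsubC _).
    by rewrite ev_atXsubC; apply/andP; lra.
  by exists g; rewrite lg lead_coefXsubC mulr1 /c gtr0_norm.
- have [|g [Ag lg sg eg]] := build _ (CsubX_in lt_s) (size_CsubX _).
    by rewrite ev_atCsubX; apply/andP; lra.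
  by exists g; rewrite lg lead_coef_CsubX mulrN1 /c ltr0_norm ?opprK.
Qed.

Lemma pos_at_in f : pos_at alpha f -> A f.
Proof.
have [n] := ubnP (size f); elim: n f => // n IH f lt_fn pos_f.
have [le_f1|] := leqP (size f) 1.
  move: pos_f; rewrite (size1_polyC le_f1) pos_atE ev_atC ltr0q.
  exact: const_in.
case sf: (size f) => [|[|k]] // _.
have lf_neq0 : lead_coef f != 0 by rewrite lead_coef_eq0 -size_poly_eq0 sf.
have [g [Ag lg sg eg]] := small_in k lf_neq0 (pos_f : 0 < ev_at f).
rewrite -(subrK g f); apply: clA.1 => //; apply: IH.
  by rewrite (leq_ltn_trans (size_sub_lead_eq sf sg _)) // -ltnS -sf.
by rewrite pos_atE rmorphB subr_gt0.
Qed.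

End LinearlyGenerated.

Definition pos_partition (A B : {poly rat} -> Prop) :=
  [/\ forall p, pos_at alpha p <-> (A p \/ B p), forall p, ~ (A p /\ B p),
      add_mul_closed A & add_mul_closed B].

Lemma pos_partitionC A B : pos_partition A B -> pos_partition B A.
Proof.
case=> hAB dAB clA clB; split=> // [p | p [Bp Ap]]; last exact: (dAB p).
by rewrite hAB; tauto.
Qed.

Section Partition.
Variables A B : {poly rat} -> Prop.
Hypothesis hAB : pos_partition A B.

Lemma partition_linear : (exists p, B p) -> exists l, B l /\ size l = 2%N.
Proof.
case: hAB => hU hD clA _ [f Bf]; apply: NNPP => no_lin.
have linA (l : {poly rat}) : size l = 2%N -> pos_at alpha l -> A l.
  by move=> sl /hU [//|Bl]; case: no_lin; exists l.
apply: (hD f); split=> //; apply: pos_at_in linA _ _ => //.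
by apply/hU; right.
Qed.

Lemma partition_sizes : (exists p, B p) ->
  forall N, (1 <= N)%N -> exists p, B p /\ size p = N.+1.
Proof.
case: hAB => _ _ _ clB /partition_linear [l [Bl sl]] [|N] // _.
exists (l ^+ N.+1); split; first exact: add_mul_closedX.
by rewrite (size_exp_eq _ sl) mul1n.
Qed.

Lemma partition_lead_signs r s : ratr r < alpha -> alpha < ratr s ->
  A (('X - r%:P) * (s%:P - 'X)) -> forall i, (2 <= i)%N ->
  exists p q, [/\ A p, A q, size p = i.+1 /\ size q = i.+1,
                  0 < lead_coef p & lead_coef q < 0].
Proof.
case: hAB => hU hD clA clB lt_r lt_s Aq i le2i.
have sq : size (('X - r%:P) * (s%:P - 'X)) = 3%N.
  rewrite size_mul ?size_XsubC ?size_CsubX // -size_poly_eq0.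
    by rewrite size_XsubC.
  by rewrite size_CsubX.
have lq : lead_coef (('X - r%:P) * (s%:P - 'X)) < 0.
  by rewrite lead_coefM lead_coefXsubC lead_coef_CsubX mul1r ltrN10.
have signs l : A l -> size l = 2%N -> _ :=
  fun Al sl => add_mul_closed_lead_signs clA Al Aq sl sq lq le2i.
have [Au|Bu] := (hU _).1 (pos_at_XsubC lt_r).
  exact: signs Au (size_XsubC _).
have [Aw|Bw] := (hU _).1 (pos_at_CsubX lt_s).
  exact: signs Aw (size_CsubX _).
by case: (hD (('X - r%:P) * (s%:P - 'X))); split=> //; apply: clB.2.
Qed.

End Partition.
End PositiveAtAlpha.

Theorem lemma4p4 (R : realType) (alpha : R) (H1 H2 : {poly rat} -> Prop)
  (hunion : forall p, pos_at alpha p <-> (H1 p \/ H2 p))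
  (hdisj : forall p, ~ (H1 p /\ H2 p))
  (hne1 : exists p, H1 p) (hne2 : exists p, H2 p)
  (hcl1 : add_mul_closed H1) (hcl2 : add_mul_closed H2) :
  (forall i : nat, (2 <= i)%N ->
     exists H, (H = H1 \/ H = H2) /\
       exists p q, [/\ H p, H q, size p = i.+1 /\ size q = i.+1,
                       0 < lead_coef p & lead_coef q < 0]) /\
  (forall N : nat, (1 <= N)%N ->
     (exists p, H1 p /\ size p = N.+1) /\ (exists p, H2 p /\ size p = N.+1)).
Proof.
have P12 : pos_partition alpha H1 H2 by split.
have P21 := pos_partitionC P12.
split=> [i le2i | N le1N]; last first.
  by split; [exact: (partition_sizes P21 hne1 le1N)
            | exact: (partition_sizes P12 hne2 le1N)].
have [r [s [lt_r lt_s _]]] := rat_bracket alpha ltr01.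
have /hunion [Hq|Hq] : pos_at alpha (('X - r%:P) * (s%:P - 'X)).
  by rewrite pos_atE rmorphM /= ev_atXsubC ev_atCsubX mulr_gt0 // subr_gt0.
- exists H1; split; first by left.
  exact: (partition_lead_signs P12 lt_r lt_s Hq le2i).
- exists H2; split; first by right.
  exact: (partition_lead_signs P21 lt_r lt_s Hq le2i).
Qed.
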